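(* Let $d\ge 2$, $n\ge 2$ and $R=\mathbb{C}[x_0,\dots,x_n]$. A tuple $(f_{ij}: 0\le i<j\le n)\in R_d^{\binom{n+1}{2}}$ is the tuple of determinantal equations of the eigenscheme of a polynomial in $R_d$, i.e. there exists $f\in R_d$ with $f_{ij}=x_i\partial_jf-x_j\partial_if$ for all $0\le i<j\le n$, if and only if $$x_if_{jk}-x_jf_{ik}+x_kf_{ij}=0\quad\text{and}\quad \partial_if_{jk}-\partial_jf_{ik}+\partial_kf_{ij}=0$$ for every $0\le i<j<k\le n$.
   Context: $\partial_i$ denotes the partial derivative $\partial/\partial x_i$. For a symmetric tensor identified with $f\in R_d$, the eigenscheme $E(f)\subseteq\mathbb{P}^n$ is defined by the $2\times 2$ minors $x_i\partial_jf-x_j\partial_if$ of $\begin{pmatrix} x_0&\dots&x_n\\ \partial_0f&\dots&\partial_nf\end{pmatrix}$, called its determinantal equations. *)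

From HB Require Import structures.
From mathcomp Require Import all_boot all_order all_algebra.
From mathcomp Require Import mpoly.
From mathcomp Require Import complex.
From mathcomp Require Import Rstruct.
From Stdlib Require Rdefinitions.
Set Implicit Arguments.
Unset Strict Implicit.
Unset Printing Implicit Defensive.
Import GRing.Theory.
Local Open Scope ring_scope.

Definition CC : fieldType := complex Rdefinitions.R.

Notation Rpoly n := {mpoly CC[n.+1]}.

Definition det_eq (n : nat) (f : Rpoly n) (i j : 'I_n.+1) : Rpoly n :=
  'X_i * mderiv j f - 'X_j * mderiv i f.

From HB Require Import structures.
From mathcomp Require Import all_boot all_order all_algebra.
From mathcomp Require Import mpoly ring zify complex Rstruct.
Import GRing.Theory Num.Theory.
Local Open Scope ring_scope.

(* Write x for the 1-form x_0 dx_0 + ... + x_n dx_n. The determinantal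
   equations of f are the coefficients of the 2-form x /\ df, and the two
   conditions of the theorem say that the 2-form F with coefficients f_ij
   satisfies x /\ F = 0 and dF = 0. Differentiating x /\ F = 0 and using
   Euler's formula gives the Koszul identity x /\ g = c F for g = div F and
   c = n + d - 1 > 0, and dF = 0 then forces x /\ dg = 0. Every homogeneous
   1-form G with x /\ dG = 0 is of the form df + u x: applying the same
   identity to dG, and induction on the degree to div dG, yields v such that
   c' G + v x is closed, hence the gradient of a homogeneous polynomial. With
   g = df + u x we get c F = x /\ df. *)

Section Alternating.
Context {V : zmodType} {n : nat}.
Local Notation I := 'I_n.

Definition alt_ext (F : I -> I -> V) (j k : I) : V :=
  if (j < k)%N then F j k else if (k < j)%N then - F k j else 0.

Lemma alt_ext_lt F {j k : I} : (j < k)%N -> alt_ext F j k = F j k.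
Proof. by rewrite /alt_ext => ->. Qed.

Lemma alt_ext_anti F (j k : I) : alt_ext F k j = - alt_ext F j k.
Proof.
by rewrite /alt_ext; case: ltngtP; rewrite ?opprK ?oppr0.
Qed.

Lemma alt_ext_diag F (j : I) : alt_ext F j j = 0.
Proof. by rewrite /alt_ext ltnn. Qed.

Lemma alternating3_eq0 (T : I -> I -> I -> V) :
    (forall i j k, T j i k = - T i j k) -> (forall i j k, T i k j = - T i j k) ->
    (forall i k, T i i k = 0) -> (forall i j k : I, (i < j < k)%N -> T i j k = 0) ->
  forall i j k, T i j k = 0.
Proof.
move=> T12 T23 Tdiag Tsorted.
have Tdiag23 i j : T i j j = 0 by rewrite (T12 j i j) (T23 j j i) Tdiag !oppr0.
have Tmono (i j k : I) : (i <= j <= k)%N -> T i j k = 0.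
  case/andP; rewrite leq_eqVlt => /predU1P[/val_inj-> _ | ij]; first exact: Tdiag.
  rewrite leq_eqVlt => /predU1P[/val_inj-> | jk]; first exact: Tdiag23.
  by apply: Tsorted; rewrite ij jk.
move=> i j k; have [ij | ji] := leqP i j; have [jk | kj] := leqP j k.
- by rewrite Tmono ?ij.
- have [ik | ki] := leqP i k.
    by rewrite (T23 i k j) Tmono ?oppr0 // ik (ltnW kj).
  by rewrite (T23 i k j) (T12 k i j) opprK Tmono // (ltnW ki) ij.
- have [ik | ki] := leqP i k.
    by rewrite (T12 j i k) Tmono ?oppr0 // (ltnW ji) ik.
  by rewrite (T12 j i k) (T23 j k i) opprK Tmono // jk (ltnW ki).
- by rewrite (T12 j i k) (T23 j k i) (T12 k j i) opprK Tmono ?oppr0 // (ltnW kj) (ltnW ji).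
Qed.

End Alternating.

Section DifferentialForms.
Context {R : comNzRingType} {n : nat}.
Local Notation P := {mpoly R[n]}.
Local Notation I := 'I_n.

Lemma mderivX1 (i j : I) : mderiv i ('X_j : P) = (j == i)%:R.
Proof.
rewrite mderivX mnm1E; case: eqP => [->|_]; last by rewrite scale0r.
have -> : (U_(i) - U_(i) = 0)%MM by apply/mnmP => l; rewrite !mnmE subnn.
by rewrite mpolyX0 scale1r.
Qed.

Lemma dhomog_mderiv k (p : P) i : p \is k.-homog -> mderiv i p \is k.-1.-homog.
Proof.
move=> /dhomogP hp; apply/dhomogP => m; rewrite mcoeff_msupp mcoeff_mderiv.
have [->|nz _] := eqVneq (p@_(m + U_(i))%MM) 0; first by rewrite mul0rn eqxx.
have := hp (m + U_(i))%MM; rewrite mcoeff_msupp nz => /(_ isT) <-.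
by rewrite /= mdegD mdeg1 addn1.
Qed.

Lemma mderiv_dhomog0 (p : P) i : p \is 0.-homog -> mderiv i p = 0.
Proof.
move=> hp; apply/mpolyP => m; rewrite mcoeff_mderiv mcoeff0.
by rewrite (dhomog_nemf_coeff hp) ?mul0rn //= mdegD mdeg1 addn1.
Qed.

Lemma dhomogXl k (p : P) (j : I) : p \is k.-homog -> 'X_j * p \is k.+1.-homog.
Proof.
by move=> hp; rewrite -add1n dhomogM // dhomogX /= mdeg1.
Qed.

Lemma sum_delta_mulr (G : I -> P) (j : I) : \sum_(i : I) (j == i)%:R * G i = G j.
Proof.
rewrite (bigD1 j) //= eqxx mul1r big1 ?addr0 // => i /negbTE.
by rewrite eq_sym => ->; rewrite mul0r.
Qed.

Lemma euler_monomial (m : 'X_{1..n}) :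
  \sum_(i : I) 'X_i * mderiv i ('X_[m] : P) = 'X_[m] *+ mdeg m.
Proof.
rewrite mdegE -sumrMnr; apply: eq_bigr => i _.
rewrite mderivX -scalerAr scaler_nat.
have [->|pos] := posnP (m i); first by rewrite !mulr0n.
congr (_ *+ _); rewrite -mpolyXD addmC submK //; apply/mnm_lepP => j.
by rewrite mnm1E; case: eqP => [<-|].
Qed.

Lemma euler {k} {p : P} : p \is k.-homog ->
  \sum_(i : I) 'X_i * mderiv i p = p *+ k.
Proof.
move=> hp.
transitivity (\sum_(i : I) \sum_(m <- msupp p) p@_m *: ('X_i * mderiv i 'X_[m])).
  apply: eq_bigr => i _; rewrite {1}[p]mpolyE raddf_sum /= mulr_sumr.
  by apply: eq_bigr => m _; rewrite mderivZ scalerAr.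
rewrite exchange_big /= [in RHS](mpolyE p) -sumrMnl; apply: eq_big_seq => m mp.
by rewrite -scaler_sumr euler_monomial (dhomog_mf hp mp) scalerMnr.
Qed.

(* A 1-form is encoded by its coefficient family G, a 2-form by an
   antisymmetric family F; xwedge is exterior multiplication by x, extd the
   exterior derivative and diverg the contraction with the vector field
   (d/dx_0, ..., d/dx_n). *)
Definition grad (f : P) (j : I) : P := mderiv j f.
Definition xwedge1 (G : I -> P) (j k : I) : P := 'X_j * G k - 'X_k * G j.
Definition extd1 (G : I -> P) (j k : I) : P := mderiv j (G k) - mderiv k (G j).
Definition xwedge2 (F : I -> I -> P) (i j k : I) : P :=
  'X_i * F j k - 'X_j * F i k + 'X_k * F i j.
Definition extd2 (F : I -> I -> P) (i j k : I) : P :=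
  mderiv i (F j k) - mderiv j (F i k) + mderiv k (F i j).
Definition diverg (F : I -> I -> P) (j : I) : P := \sum_(i : I) mderiv i (F i j).

Lemma extd1_anti (G : I -> P) j k : extd1 G k j = - extd1 G j k.
Proof. by rewrite /extd1 opprB. Qed.

Lemma dhomog_extd1 {m} {G : I -> P} :
  (forall j, G j \is m.-homog) -> forall j k, extd1 G j k \is m.-1.-homog.
Proof. by move=> Ghomog j k; rewrite rpredB // dhomog_mderiv. Qed.

Lemma xwedge2_xwedge1 G i j k : xwedge2 (xwedge1 G) i j k = 0.
Proof. by rewrite /xwedge2 /xwedge1; ring. Qed.

Lemma extd1_grad f j k : extd1 (grad f) j k = 0.
Proof. by rewrite /extd1 /grad mderiv_comm subrr. Qed.

Lemma extd2_extd1 G i j k : extd2 (extd1 G) i j k = 0.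
Proof.
rewrite /extd2 /extd1 !mderivB.
rewrite (mderiv_comm j i (G k)) (mderiv_comm k i (G j)) (mderiv_comm k j (G i)).
ring.
Qed.

Lemma extd2_xwedge1 G i j k : extd2 (xwedge1 G) i j k = - xwedge2 (extd1 G) i j k.
Proof.
rewrite /extd2 /xwedge1 /xwedge2 /extd1 !mderivB !mderivM !mderivX1.
rewrite [j == i]eq_sym [k == i]eq_sym [k == j]eq_sym.
ring.
Qed.

Lemma mderiv_sum_X_closed {m} {G : I -> P} :
    (forall j, G j \is m.-homog) -> (forall j k, extd1 G j k = 0) ->
  forall j, mderiv j (\sum_(i : I) 'X_i * G i) = G j *+ m.+1.
Proof.
move=> Ghomog Gclosed j; rewrite raddf_sum /=.
under eq_bigr => i _ do
  rewrite mderivM mderivX1 eq_sym [mderiv j (G i)](subr0_eq (Gclosed j i)).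
by rewrite big_split /= sum_delta_mulr (euler (Ghomog j)) mulrSr addrC.
Qed.

Lemma extd2_xwedge1_grad f i j k : extd2 (xwedge1 (grad f)) i j k = 0.
Proof. by rewrite extd2_xwedge1 /xwedge2 !extd1_grad !mulr0 subrr add0r oppr0. Qed.

Section Alternating2Form.
Variable F : I -> I -> P.
Hypotheses (Fanti : forall j k, F k j = - F j k) (Fdiag : forall j, F j j = 0).

Lemma xwedge2_eq0_of_sorted :
    (forall i j k : I, (i < j < k)%N -> xwedge2 F i j k = 0) ->
  forall i j k, xwedge2 F i j k = 0.
Proof.
apply: alternating3_eq0 => [i j k | i j k | i k]; rewrite /xwedge2.
- by rewrite (Fanti i j); ring.
- by rewrite (Fanti j k); ring.
- by rewrite Fdiag; ring.
Qed.

Lemma extd2_eq0_of_sorted :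
    (forall i j k : I, (i < j < k)%N -> extd2 F i j k = 0) ->
  forall i j k, extd2 F i j k = 0.
Proof.
apply: alternating3_eq0 => [i j k | i j k | i k]; rewrite /extd2.
- by rewrite (Fanti i j) mderivN; ring.
- by rewrite (Fanti j k) mderivN; ring.
- by rewrite Fdiag mderiv0; ring.
Qed.

End Alternating2Form.

Lemma dhomog_diverg {e} {F : I -> I -> P} :
  (forall j k, F j k \is e.-homog) -> forall j, diverg F j \is e.-1.-homog.
Proof. by move=> Fhomog j; rewrite rpred_sum // => i _; apply: dhomog_mderiv. Qed.

Section KoszulCycle.
Context {e : nat} {F : I -> I -> P}.
Hypotheses (n_ge2 : (2 <= n)%N) (Fanti : forall j k, F k j = - F j k).
Hypotheses (Fhomog : forall j k, F j k \is e.-homog).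
Hypothesis (FxF0 : forall i j k, xwedge2 F i j k = 0).

Lemma koszul_identity j k : xwedge1 (diverg F) j k + F j k *+ 2 = F j k *+ (n + e).
Proof.
(* Sum the derivatives d/dx_i of the relations (x /\ F)_ijk = 0 over i. *)
have div_xwedge2 : \sum_(i : I) mderiv i (xwedge2 F i j k) =
    F j k *+ n + \sum_(i : I) 'X_i * mderiv i (F j k) - F j k - F j k
    - xwedge1 (diverg F) j k.
  rewrite /xwedge1 /diverg !mulr_sumr.
  transitivity (\sum_(i : I) (F j k + 'X_i * mderiv i (F j k))
    - \sum_(i : I) ((j == i)%:R * F i k) - \sum_(i : I) 'X_j * mderiv i (F i k)
    + \sum_(i : I) ((k == i)%:R * F i j) + \sum_(i : I) 'X_k * mderiv i (F i j)).
    rewrite -!sumrB -!big_split /=; apply: eq_bigr => i _.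
    rewrite /xwedge2 !(mderivD, mderivB, mderivN, mderivM) !mderivX1 eqxx mul1r; ring.
  rewrite big_split /= sumr_const card_ord !sum_delta_mulr (Fanti j k); ring.
move: div_xwedge2; rewrite big1 => [|i _]; last by rewrite FxF0 mderiv0.
rewrite (euler (Fhomog j k)) => E.
apply/eqP; rewrite -subr_eq0 -oppr_eq0; apply/eqP.
by rewrite [RHS]E mulrnDr mulr2n; ring.
Qed.

Lemma xwedge1_diverg j k : xwedge1 (diverg F) j k = F j k *+ (n - 2 + e).
Proof.
apply: (addIr (F j k *+ 2)); rewrite koszul_identity -mulrnDr.
by rewrite addnAC subnK.
Qed.

Lemma xwedge2_extd1_diverg :
  (forall i j k, extd2 F i j k = 0) -> forall i j k, xwedge2 (extd1 (diverg F)) i j k = 0.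
Proof.
move=> FdF0 i j k; apply/eqP; rewrite -oppr_eq0 -extd2_xwedge1.
by rewrite /extd2 !xwedge1_diverg !mderivMn -mulrnBl -mulrnDl -/(extd2 F i j k) FdF0 mul0rn.
Qed.

End KoszulCycle.

End DifferentialForms.

Section CharZero.
Context {R : fieldType} {n : nat}.
Hypothesis charR0 : has_pchar0 R.
Local Notation P := {mpoly R[n]}.
Local Notation I := 'I_n.

Lemma scaleVnat_MnK k (p : P) : (0 < k)%N -> (k%:R : R)^-1 *: (p *+ k) = p.
Proof.
move=> k_gt0; rewrite -scalerMnr scalerMnl -mulr_natr mulVf ?scale1r //.
by move/pcharf0P: charR0 => ->; rewrite -lt0n.
Qed.

Lemma exists_potential {m} {G : I -> P} :
    (forall j, G j \is m.-homog) -> (forall j k, extd1 G j k = 0) ->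
  exists f : P, f \is m.+1.-homog /\ forall j, G j = mderiv j f.
Proof.
move=> Ghomog Gclosed.
exists ((m.+1%:R : R)^-1 *: \sum_(i : I) 'X_i * G i); split.
  by rewrite rpredZ // rpred_sum // => i _; apply: dhomogXl.
by move=> j; rewrite mderivZ (mderiv_sum_X_closed Ghomog Gclosed) scaleVnat_MnK.
Qed.

Section Decomposition.
Context {m : nat} {G : I -> P}.
Hypotheses (n_ge3 : (3 <= n)%N) (Ghomog : forall j, G j \is m.-homog).
Hypothesis (GxdG0 : forall i j k, xwedge2 (extd1 G) i j k = 0).
Local Notation c := (n - 2 + m.-1)%N.

Lemma xwedge1_diverg_extd1 j k : xwedge1 (diverg (extd1 G)) j k = extd1 G j k *+ c.
Proof.
have n_ge2 : (2 <= n)%N by lia.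
exact: (xwedge1_diverg n_ge2 (extd1_anti G) (dhomog_extd1 Ghomog) GxdG0).
Qed.

Lemma decomposition_of_xwedge1_grad (v : P) :
    (forall j, v * 'X_j \is m.-homog) ->
    (forall j k, xwedge1 (diverg (extd1 G)) j k = xwedge1 (grad v) j k) ->
  exists (f : P) (u : P), f \is m.+1.-homog /\ forall j, G j = mderiv j f + u * 'X_j.
Proof.
move=> vXhomog vgrad.
pose Q j := G j *+ c + v * 'X_j.
have Qhomog j : Q j \is m.-homog by rewrite /Q rpredD ?rpredMn ?Ghomog ?vXhomog.
have Qclosed j k : extd1 Q j k = 0.
  have -> : extd1 Q j k = extd1 G j k *+ c - xwedge1 (grad v) j k.
    rewrite /extd1 /xwedge1 /grad !(mderivD, mderivMn, mderivM, mderivX1) [k == j]eq_sym.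
    by rewrite mulrnBl; ring.
  by rewrite -vgrad xwedge1_diverg_extd1 subrr.
have c_gt0 : (0 < c)%N by lia.
have [f [fhomog Qgrad]] := exists_potential Qhomog Qclosed.
exists ((c%:R : R)^-1 *: f), (- (c%:R : R)^-1 *: v); split; first by rewrite rpredZ.
move=> j; rewrite mderivZ -Qgrad scaleNr mulNr -scalerAl -scalerBr /Q addrK.
by rewrite scaleVnat_MnK.
Qed.

End Decomposition.

Lemma decomposition_of_xwedge2_extd1 {m} {G : I -> P} : (3 <= n)%N ->
    (forall j, G j \is m.-homog) -> (forall i j k, xwedge2 (extd1 G) i j k = 0) ->
  exists (f : P) (u : P), f \is m.+1.-homog /\ forall j, G j = mderiv j f + u * 'X_j.
Proof.
move=> n_ge3; elim/ltn_ind: m G => m IH G Ghomog GxdG0.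
pose K := diverg (extd1 G).
have Khomog l : K l \is m.-2.-homog by apply/dhomog_diverg/dhomog_extd1.
suff [v [vXhomog vgrad]] : exists v : P, (forall j, v * 'X_j \is m.-homog) /\
    forall j k, xwedge1 K j k = xwedge1 (grad v) j k.
  exact: decomposition_of_xwedge1_grad vXhomog vgrad.
have [m_lt2 | m_ge2] := ltnP m 2.
  exists 0; split=> [j | j k]; first by rewrite mul0r rpred0.
  (* K would have negative degree. *)
  have K0 l : K l = 0.
    rewrite /K /diverg big1 // => i _; apply: mderiv_dhomog0.
    by have := dhomog_extd1 Ghomog i l; have -> : m.-1 = 0%N by lia.
  by rewrite /xwedge1 /grad !K0 !mderiv0 !mulr0 subrr.
have n_ge2 : (2 <= n)%N by lia.
have KxdK0 := xwedge2_extd1_diverg n_ge2 (extd1_anti G) (dhomog_extd1 Ghomog) GxdG0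
  (extd2_extd1 G).
have [f [u [fhomog Kdecomp]]] := IH m.-2 ltac:(lia) K Khomog KxdK0.
exists f; split=> [j | j k].
  by rewrite mulrC (_ : m = m.-2.+2) ?dhomogXl //; lia.
by rewrite /xwedge1 /grad !Kdecomp; ring.
Qed.

Lemma exists_xwedge1_grad {d} {F : I -> I -> P} : (3 <= n)%N -> (0 < d)%N ->
    (forall j k, F k j = - F j k) -> (forall j k, F j k \is d.-homog) ->
    (forall i j k, xwedge2 F i j k = 0) -> (forall i j k, extd2 F i j k = 0) ->
  exists f : P, f \is d.-homog /\ forall j k, F j k = xwedge1 (grad f) j k.
Proof.
move=> n_ge3 d_gt0 Fanti Fhomog FxF0 FdF0.
have n_ge2 : (2 <= n)%N by lia.
have [f [u [fhomog gdecomp]]] := decomposition_of_xwedge2_extd1 n_ge3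
  (dhomog_diverg Fhomog) (xwedge2_extd1_diverg n_ge2 Fanti Fhomog FxF0 FdF0).
exists (((n - 2 + d)%:R : R)^-1 *: f); split.
  by rewrite rpredZ // -(ltn_predK d_gt0).
move=> j k; rewrite -(@scaleVnat_MnK (n - 2 + d) (F j k)); last by lia.
rewrite -(xwedge1_diverg n_ge2 Fanti Fhomog FxF0) /xwedge1 /grad !gdecomp !mderivZ.
by rewrite -!scalerAr -scalerBr; congr (_ *: _); ring.
Qed.

End CharZero.

Theorem theorem3p3 (d n : nat) (hd : (2 <= d)%N) (hn : (2 <= n)%N)
  (F : 'I_n.+1 -> 'I_n.+1 -> Rpoly n)
  (hF : forall i j : 'I_n.+1, (i < j)%N -> F i j \is d.-homog) :
  (exists f : Rpoly n, f \is d.-homog /\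
     forall i j : 'I_n.+1, (i < j)%N -> F i j = det_eq f i j)
  <->
  (forall i j k : 'I_n.+1, (i < j)%N -> (j < k)%N ->
     'X_i * F j k - 'X_j * F i k + 'X_k * F i j = 0 /\
     mderiv i (F j k) - mderiv j (F i k) + mderiv k (F i j) = 0).
Proof.
split.
  case=> f [_ Fdet] i j k ij jk; rewrite !Fdet ?(ltn_trans ij jk) //.
  by split; [apply: (xwedge2_xwedge1 (grad f)) | apply: extd2_xwedge1_grad].
move=> FxdF0; pose Fe := alt_ext F.
have Fe_homog j k : Fe j k \is d.-homog.
  by rewrite /Fe /alt_ext; case: ltngtP => *; rewrite ?rpredN ?hF ?rpred0.
have FexF0 : forall i j k, xwedge2 Fe i j k = 0.
  apply: xwedge2_eq0_of_sorted (alt_ext_anti F) (alt_ext_diag F) _ => i j k /andP[ij jk].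
  by rewrite /xwedge2 !alt_ext_lt ?(ltn_trans ij jk) //; case: (FxdF0 i j k ij jk).
have FedF0 : forall i j k, extd2 Fe i j k = 0.
  apply: extd2_eq0_of_sorted (alt_ext_anti F) (alt_ext_diag F) _ => i j k /andP[ij jk].
  by rewrite /extd2 !alt_ext_lt ?(ltn_trans ij jk) //; case: (FxdF0 i j k ij jk).
have CC_char0 : has_pchar0 CC by exact: (@pchar_num (complex Rdefinitions.R)).
have [f [fhomog Fe_grad]] := exists_xwedge1_grad (n := n.+1) CC_char0 hn
  (ltnW hd) (alt_ext_anti F) Fe_homog FexF0 FedF0.
by exists f; split=> // i j ij; rewrite -(alt_ext_lt F ij) Fe_grad.
Qed.
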